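(* Let $b\ge 2$ and $n\ge 0$ be integers. Then $bt+(b-1)\in T_b(n)$ for every $t\in T_b(n)\setminus\{0\}$.
   Context: For integers $b\ge 2$, $n\ge 0$, $i\ge0$ put $s_i=(b+1)b^{n+i}-1$ and $T_b(n)=\langle\{s_i:i\in\mathbb{N}\}\rangle$, the submonoid of $(\mathbb{N},+)$ generated by the $s_i$. *)

From mathcomp Require Import all_boot.
Set Implicit Arguments. Unset Strict Implicit. Unset Printing Implicit Defensive.

Definition sgen (b n i : nat) : nat := (b.+1) * b ^ (n + i) - 1.

(* Membership in the submonoid of (N,+) generated by {s_i : i in N}:
   the smallest subset containing 0 and closed under adding a generator. *)
Inductive inT (b n : nat) : nat -> Prop :=
| inT0 : inT b n 0
| inTadd : forall i t, inT b n t -> inT b n (sgen b n i + t).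

(* Since s_(i+1) = b s_i + (b - 1), writing a nonzero t in T_b(n) as s_i + t'
   gives b t + (b - 1) = s_(i+1) + b t', and T_b(n) is closed under addition
   and hence under multiplication by b. *)
From mathcomp Require Import all_boot.
From mathcomp Require Import zify.

Lemma inTD b n x y : inT b n x -> inT b n y -> inT b n (x + y).
Proof.
elim=> [|i t _ IHt] Hy; first by [].
by rewrite -addnA; apply: inTadd; apply: IHt.
Qed.

Lemma inTMl b n k x : inT b n x -> inT b n (k * x).
Proof.
move=> Hx; elim: k => [|k IHk]; first by rewrite mul0n; constructor.
by rewrite mulSn; apply: inTD.
Qed.

Lemma sgenS b n i : 0 < b -> sgen b n i.+1 = b * sgen b n i + (b - 1).
Proof.
move=> b_gt0; rewrite /sgen addnS expnS.
have : 0 < b ^ (n + i) by rewrite expn_gt0 b_gt0.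
set p := b ^ (n + i); nia.
Qed.

Theorem mainTheorem5 (b n t : nat) (hb : 2 <= b) :
  inT b n t -> t <> 0 -> inT b n (b * t + (b - 1)).
Proof.
case=> [//|i t' Ht'] _.
have -> : b * (sgen b n i + t') + (b - 1) = (b * sgen b n i + (b - 1)) + b * t'
  by lia.
rewrite -sgenS; last exact: leq_trans hb.
by apply: inTadd; apply: inTMl.
Qed.
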